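(* Let $(\eta_k)_{k\in\mathbb{N}}$ be independent random variables with values in $\mathbb{N}$, $P(\eta_k=i)=p_{ik}$ with $p_{ik}\ge0$ and $\sum_{i=1}^\infty p_{ik}=1$ for all $k$, and suppose there exists $i_0\in\mathbb{N}$ with $\sum_{k=1}^\infty p_{i_0k}=+\infty$. Let $$\eta=\sum_{k=1}^\infty\frac{(-1)^{k-1}}{\eta_1(\eta_1+\eta_2)\cdots(\eta_1+\eta_2+\dots+\eta_k)}.$$ Then: (1) $\eta$ has a purely discrete distribution if and only if $\prod_{k=1}^\infty\max_i p_{ik}>0$; (2) in all other cases $\eta$ has a singularly continuous distribution. *)

From HB Require Import structures.
From mathcomp Require Import all_boot all_order all_algebra.
From mathcomp Require Import all_classical all_reals all_analysis.
Set Implicit Arguments. Unset Strict Implicit. Unset Printing Implicit Defensive.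
Import Order.TTheory GRing.Theory Num.Theory.
Import numFieldNormedType.Exports.
Local Open Scope classical_set_scope.
Local Open Scope ring_scope.

Section Defs.
Context {d : measure_display} {T : measurableType d} {R : realType}.
Variable P : probability T R.

(* Mutual independence of the nat-valued (discrete) random variables
   eta_k : every finite subfamily satisfies the product rule for arbitrary
   events {eta_k \in A_k} (every subset of nat is measurable). *)
Definition mutually_independent (eta : nat -> T -> nat) : Prop :=
  forall (F : seq nat) (A : nat -> set nat), uniq F ->
    P [set w | forall k, k \in F -> A k (eta k w)] =
    (\prod_(k <- F) P [set w | A k (eta k w)])%E.

Definition pik (eta : nat -> T -> nat) (i k : nat) : \bar R :=
  P [set w | eta k w = i].

(* max_i p_{ik} (as a supremum, which is attained) *)
Definition pmax (eta : nat -> T -> nat) (k : nat) : \bar R :=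
  ereal_sup (range (fun i => pik eta i k)).

(* the infinite product prod_{k>=1} max_i p_{ik} (limit of partial products,
   which exists since the partial products are nonincreasing in [0,1]) *)
Definition prod_pmax (eta : nat -> T -> nat) : \bar R :=
  limn (fun n => (\prod_(k < n) pmax eta k)%E).

(* eta = sum_{k>=1} (-1)^(k-1) / (eta_1 (eta_1+eta_2) ... (eta_1+...+eta_k)),
   with indices shifted to start at 0. *)
Definition eta_denom (eta : nat -> T -> nat) (k : nat) (w : T) : R :=
  \prod_(j < k.+1) ((\sum_(l < j.+1) eta l w)%N)%:R.

Definition eta_sum (eta : nat -> T -> nat) (w : T) : R :=
  limn (series (fun k => (-1) ^+ k / eta_denom eta k w)).

Definition purely_discrete_distr (X : T -> R) : Prop :=
  exists C : set R, countable C /\ P (X @^-1` C) = 1%E.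

Definition singular_continuous_distr (X : T -> R) : Prop :=
  (forall x : R, P (X @^-1` [set x]) = 0%E) /\
  exists N : set R, measurable N /\ (@lebesgue_measure R) N = 0%E /\
    P (X @^-1` N) = 1%E.

End Defs.

From HB Require Import structures.
From mathcomp Require Import all_boot all_order all_algebra.
From mathcomp Require Import all_classical all_reals all_analysis.
From mathcomp Require Import ring lra.
Import Order.TTheory GRing.Theory Num.Theory.
Import numFieldNormedType.Exports.
Local Open Scope classical_set_scope.
Local Open Scope ring_scope.

Set Implicit Arguments. Unset Strict Implicit.

(** Writing q_k = eta_0 + ... + eta_k, the random variable eta is the
Ostrogradsky series sum_k (-1)^k / (q_0 ... q_k) of a strictly increasing
positive sequence.  Such a series satisfies 1/(q_0 + 1) < eta < 1/q_0 and
eta = (1 - eta') / q_0, where eta' is the series of the shifted sequence, so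
the digits q_k, hence the eta_k, can be read off the value of eta.  The atoms
of eta are therefore the events {eta_k = i_k for all k}, and by independence
each has probability at most prod_(k < n) max_i p_ik for every n.

If this product tends to 0, eta has no atoms.  By the second Borel-Cantelli
lemma eta_k = i_0 for infinitely many k almost surely, whereas the reals whose
k-th digit gap q_k - q_(k-1) equals i_0 form a set of Lebesgue measure at most
2^-k; their lim sup is a Lebesgue-null set carrying the law of eta.

If the product is positive, sum_k (1 - max_i p_ik) converges, so by the first
Borel-Cantelli lemma eta_k eventually equals a near-maximiser m_k of p_(.)k
almost surely, and eta takes its values in the countable set of series of
finite modifications of m. *)

Lemma nneseries_le_ub (R : realType) (u : nat -> \bar R) (M : \bar R) :
  (forall n, 0 <= u n)%E -> (forall N, \sum_(0 <= n < N) u n <= M)%E ->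
  (\sum_(0 <= n <oo) u n <= M)%E.
Proof. by move=> u_ge0 ub; apply: lime_le; [exact: is_cvg_nneseries|exact: nearW]. Qed.

Lemma measurable_lim_sup_set d (T : measurableType d) (F : (set T)^nat) :
  (forall k, measurable (F k)) -> measurable (lim_sup_set F).
Proof.
by move=> mF; apply: bigcapT_measurable => n; apply: bigcup_measurable => k _.
Qed.

Lemma telescope_inv3 (R : realFieldType) (m N : nat) :
  \sum_(n < N) (((m + n)%:R + 1) * ((m + n)%:R + 2) * ((m + n)%:R + 3))^-1
  = (((m%:R + 1) * (m%:R + 2))^-1
     - (((m + N)%:R + 1) * ((m + N)%:R + 2))^-1) / 2 :> R.
Proof.
elim: N => [|N IH]; first by rewrite big_ord0 addn0 subrr mul0r.
rewrite big_ord_recr /= IH addnS -natr1.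
have := ler0n R (m + N); set x := (m + N)%:R => x_ge0.
by field; rewrite ?lt0r_neq0 //; lra.
Qed.

Lemma measure_bigcup0 d (T : measurableType d) (R : realType)
    (mu : {measure set T -> \bar R}) (F : (set T)^nat) :
  (forall n, measurable (F n)) -> (forall n, mu (F n) = 0%E) -> mu (\bigcup_n F n) = 0%E.
Proof.
move=> mF F0; apply/eqP; rewrite eq_le measure_ge0 andbT.
have := measure_sigma_subadditive mu mF (bigcupT_measurable _ mF) (@subset_refl _ _).
by rewrite eseries0.
Qed.

Lemma measurable_forall_in d (T : measurableType d) (s : seq nat) (G : nat -> set T) :
  (forall k, measurable (G k)) -> measurable [set w | forall k, k \in s -> G k w].
Proof.
move=> mG; rewrite [X in measurable X](_ : _ =
    \bigcap_k (if k \in s then G k else setT)); last first.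
  apply/seteqP; split=> [w ws k _|w ws k ks]; first by case: ifPn => // /ws.
  by have := ws k I; rewrite ks.
by apply: bigcapT_measurable => k; case: ifP.
Qed.

Lemma lee_prod_nneg (R : realDomainType) (I : Type) (s : seq I) (f g : I -> \bar R) :
  (forall i, 0 <= f i)%E -> (forall i, f i <= g i)%E ->
  (\prod_(i <- s) f i <= \prod_(i <- s) g i)%E.
Proof.
move=> f_ge0 fg; elim: s => [|i s IH]; rewrite ?big_nil ?big_cons //.
by apply: lee_pmul => //; exact: prode_ge0.
Qed.

Lemma prod_compl_mul_sum_le1 (R : realFieldType) (I : Type) (s : seq I) (f : I -> R) :
  (forall i, 0 <= f i <= 1) -> (\prod_(i <- s) (1 - f i)) * (1 + \sum_(i <- s) f i) <= 1.
Proof.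
move=> f01; elim: s => [|i s IH]; first by rewrite !big_nil mul1r addr0.
rewrite !big_cons; have /andP[fi_ge0 fi_le1] := f01 i.
have p_ge0 : 0 <= \prod_(j <- s) (1 - f j).
  by apply: prodr_ge0 => j _; have /andP[] := f01 j; lra.
have S_ge0 : 0 <= \sum_(j <- s) f j by apply: sumr_ge0 => j _; have /andP[] := f01 j.
set p := \prod_(j <- s) _ in p_ge0 IH *; set S := \sum_(j <- s) _ in S_ge0 IH *.
have p_le1 : p <= 1 by nra.
nra.
Qed.

Lemma sum_le_inv_prod_compl (R : realFieldType) (I : Type) (s : seq I) (f : I -> R) (c : R) :
  (forall i, 0 <= f i <= 1) -> 0 < c -> c <= \prod_(i <- s) (1 - f i) ->
  \sum_(i <- s) f i <= c^-1.
Proof.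
move=> f01 c_gt0 c_le; have pS := prod_compl_mul_sum_le1 s f01.
have S_ge0 : 0 <= \sum_(i <- s) f i by apply: sumr_ge0 => i _; have /andP[] := f01 i.
set p := \prod_(i <- s) _ in c_le pS; set S := \sum_(i <- s) _ in S_ge0 pS *.
have cS : c * S <= 1 by nra.
by rewrite -ler_pdivlMl // mulr1 in cS.
Qed.

Lemma sum_half_powS_le1 (R : realType) N : \sum_(0 <= k < N) 2^-1 ^+ k.+1 <= 1 :> R.
Proof.
have half : 1 - 2^-1 = 2^-1 :> R by field.
under eq_bigr do rewrite exprS.
apply: le_trans (geometric_le_lim N _ _ _) _;
  by rewrite ?half ?mulfV ?invr_ge0 ?invr_gt0 ?ger0_norm ?invf_lt1 ?ltr1n.
Qed.

Lemma atomless_not_purely_discrete d (T : measurableType d) (R : realType)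
    (P : probability T R) (X : T -> R) :
  (forall x, measurable (X @^-1` [set x])) -> (forall x, P (X @^-1` [set x]) = 0%E) ->
  ~ purely_discrete_distr P X.
Proof.
move=> m_atom atom0 [C [/countable_injP[f f_inj] PC]].
pose G n := X @^-1` [set x | C x /\ f x = n].
have G_atom n : G n = set0 \/ exists x, G n = X @^-1` [set x].
  have [[x [Cx fx]]|none] := pselect (exists x, C x /\ f x = n); last first.
    by left; apply/seteqP; split=> w // [Cw fw]; apply: none; exists (X w).
  right; exists x; apply/seteqP; split=> w; rewrite /G /=; last by move=> ->.
  by move=> [Cw fw]; apply: f_inj; rewrite ?inE // fw fx.
have mG n : measurable (G n) by case: (G_atom n) => [->|[x ->]].
have CE : X @^-1` C = \bigcup_n G n.
  by apply/seteqP; split=> [w Cw|w [n _ []]] //; exists (f (X w)).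
move: PC; rewrite CE measure_bigcup0 // => [|n]; first by move=> /eqP; rewrite eqe eq_sym oner_eq0.
by case: (G_atom n) => [->|[x ->]]; [exact: measure0|exact: atom0].
Qed.

Section ostrogradsky_series.
Context {R : realType}.
Implicit Types q : nat -> nat.

Definition increasing_pos q := (0 < q 0)%N /\ forall j, (q j < q j.+1)%N.

Definition tailq q j := q j.+1.

Definition ostro_term q k : R := (-1) ^+ k / \prod_(j < k.+1) (q j)%:R.

Definition ostro q : R := limn (series (ostro_term q)).

Lemma increasing_pos_tail q : increasing_pos q -> increasing_pos (tailq q).
Proof.
by move=> [q0 qS]; split=> [|j]; [exact: leq_ltn_trans (qS 0%N)|exact: qS].
Qed.

Lemma increasing_pos_gt q j : increasing_pos q -> (j < q j)%N.
Proof. by move=> [q0 qS]; elim: j => [//|j IH]; exact: leq_ltn_trans IH (qS j). Qed.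

Lemma expn2_le_prod q k : increasing_pos q -> (2 ^ k <= \prod_(j < k.+1) q j)%N.
Proof.
move=> iq; elim: k => [|k IH]; first by rewrite big_ord1; case: iq.
rewrite big_ord_recr /= expnSr leq_mul //.
exact: leq_ltn_trans (ltn0Sn k) (increasing_pos_gt k.+1 iq).
Qed.

Lemma norm_ostro_term_le q k : increasing_pos q -> `|ostro_term q k| <= 2^-1 ^+ k.
Proof.
move=> iq; have prod_ge := expn2_le_prod k iq.
have prod_gt0 : 0 < \prod_(j < k.+1) (q j)%:R :> R.
  by rewrite -natr_prod ltr0n (leq_trans _ prod_ge) ?expn_gt0.
rewrite /ostro_term normrM normrX normrN1 expr1n mul1r normfV ger0_norm ?(ltW prod_gt0) //.
by rewrite exprVn lef_pV2 ?posrE ?exprn_gt0 // -natr_prod -natrX ler_nat.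
Qed.

Lemma is_cvg_ostro_series q : increasing_pos q -> cvgn (series (ostro_term q)).
Proof.
move=> iq; apply: normed_cvg; apply: (@series_le_cvg _ _ (geometric 1 2^-1)).
- by move=> n; exact: normr_ge0.
- by move=> n; rewrite /geometric /= mul1r exprn_ge0 // invr_ge0.
- by move=> n; rewrite /geometric /= mul1r norm_ostro_term_le.
- by apply: is_cvg_geometric_series; rewrite ger0_norm ?invr_ge0 // invf_lt1 // ltr1n.
Qed.

Lemma ostro_seriesS q n : series (ostro_term q) n.+1 =
  (q 0)%:R^-1 * (1 - series (ostro_term (tailq q)) n).
Proof.
rewrite !seriesEord /= big_ord_recl /ostro_term big_ord1 expr0 mul1r.
rewrite mulrBr mulr1 mulr_sumr -sumrN; congr (_ + _); apply: eq_bigr => i _.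
by rewrite lift0 big_ord_recl exprS invfM mulN1r mulNr mulrCA.
Qed.

Lemma ostroS q : increasing_pos q -> ostro q = (q 0)%:R^-1 * (1 - ostro (tailq q)).
Proof.
move=> iq; apply: cvg_lim => //; rewrite -cvg_shiftS /=.
under eq_fun do rewrite ostro_seriesS.
apply: cvgM; first exact: cvg_cst.
by apply: cvgB; [exact: cvg_cst|exact/is_cvg_ostro_series/increasing_pos_tail].
Qed.

Lemma ostro_series_bound n q : increasing_pos q ->
  0 <= series (ostro_term q) n <= (q 0)%:R^-1.
Proof.
elim: n q => [|n IH] q iq.
  by rewrite seriesEord /= big_ord0 lexx invr_ge0 ler0n.
have /andP[s_ge0 s_le] := IH _ (increasing_pos_tail iq).
have q0 : 1 <= (q 0)%:R :> R by rewrite ler1n; case: iq.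
have q1 : (q 1)%:R^-1 <= 1 :> R.
  by rewrite invf_le1 ?ler1n ?ltr0n (leq_ltn_trans _ (increasing_pos_gt 1 iq)).
have inv_q0 : 0 < (q 0)%:R^-1 :> R by rewrite invr_gt0; lra.
rewrite /tailq in s_le; rewrite ostro_seriesS; apply/andP; split.
  by apply: mulr_ge0; lra.
by rewrite ler_piMr //; lra.
Qed.

Lemma ostro_bound q : increasing_pos q -> 0 <= ostro q <= (q 0)%:R^-1.
Proof.
move=> iq; apply/andP; split.
  apply: limr_ge; first exact: is_cvg_ostro_series.
  by apply: nearW => n; case/andP: (ostro_series_bound n iq).
apply: limr_le; first exact: is_cvg_ostro_series.
by apply: nearW => n; case/andP: (ostro_series_bound n iq).
Qed.

Lemma ostro_gt0 q : increasing_pos q -> 0 < ostro q.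
Proof.
move=> iq; have /andP[_ tail_le] := ostro_bound (increasing_pos_tail iq).
have q0 : 1 <= (q 0)%:R :> R by rewrite ler1n; case: iq.
have q1 : (q 1)%:R^-1 < 1 :> R.
  by rewrite invf_lt1 ?ltr0n ?ltr1n (leq_ltn_trans _ (increasing_pos_gt 1 iq)).
rewrite /tailq in tail_le; rewrite ostroS //.
by apply: mulr_gt0; [rewrite invr_gt0; lra|lra].
Qed.

Lemma ostro_lt_inv_head q : increasing_pos q -> ostro q < (q 0)%:R^-1.
Proof.
move=> iq; have tail_gt0 := ostro_gt0 (increasing_pos_tail iq).
have q0 : 1 <= (q 0)%:R :> R by rewrite ler1n; case: iq.
by rewrite ostroS // gtr_pMr ?invr_gt0; lra.
Qed.

Lemma inv_head_succ_lt_ostro q : increasing_pos q -> ((q 0)%:R + 1)^-1 < ostro q.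
Proof.
move=> iq; have tail_gt0 := ostro_gt0 (increasing_pos_tail iq).
have tail_lt := ostro_lt_inv_head (increasing_pos_tail iq).
have q0 : 1 <= (q 0)%:R :> R by rewrite ler1n; case: iq.
have q1 : (q 1)%:R^-1 <= ((q 0)%:R + 1)^-1 :> R.
  have [q0_gt0 qS] := iq.
  by rewrite natr1 lef_pV2 ?posrE ?ltr0n ?ler_nat ?qS // (ltn_trans q0_gt0).
rewrite /tailq in tail_lt; rewrite ostroS //.
set x := (q 0)%:R in q0 q1 *; set s := ostro _ in tail_gt0 tail_lt *.
have -> : (x + 1)^-1 = x^-1 * (1 - (x + 1)^-1) by field; lra.
by rewrite ltr_pM2l ?invr_gt0; lra.
Qed.

Lemma ostro_head q (b : nat) : increasing_pos q -> (0 < b)%N ->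
  (b%:R + 1)^-1 < ostro q < b%:R^-1 -> q 0 = b.
Proof.
move=> iq b_gt0 /andP[lb ub]; have q0 := iq.1.
have := lt_trans lb (ostro_lt_inv_head iq).
have := lt_trans (inv_head_succ_lt_ostro iq) ub.
rewrite !ltf_pV2 ?posrE ?addr_gt0 ?ltr0n // !natr1 !ltr_nat !ltnS => b_le q_le.
by apply/eqP; rewrite eqn_leq q_le b_le.
Qed.

Lemma ostro_inj q q' : increasing_pos q -> increasing_pos q' ->
  ostro q = ostro q' -> q =1 q'.
Proof.
move=> iq iq' e n; elim: n q q' iq iq' e => [|n IH] q q' iq iq' e;
  have head : q 0 = q' 0 by apply: ostro_head iq iq'.1 _;
    rewrite e inv_head_succ_lt_ostro ?ostro_lt_inv_head.
  by [].
apply: IH (increasing_pos_tail iq) (increasing_pos_tail iq') _.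
move: e; rewrite (ostroS iq) (ostroS iq') head => /mulfI.
rewrite invr_eq0 pnatr_eq0 -lt0n iq'.1 => /(_ isT) /addrI; exact: oppr_inj.
Qed.

End ostrogradsky_series.

Section reflect_scale.
Context {R : realType} (b : R).
Hypothesis b_gt0 : 0 < b.

Definition reflect_scale (x : R) : R := 1 - b * x.

Lemma measurable_reflect_scale : measurable_fun setT reflect_scale.
Proof. exact: measurable_realfun.measurable_funB. Qed.

Lemma reflect_scale_preimage_itv (l u : R) :
  reflect_scale @^-1` `]l, u]%classic = `[(1 - u) / b, (1 - l) / b[%classic.
Proof.
apply/seteqP; split => x /=; rewrite !in_itv /= /reflect_scale => /andP[h1 h2];
  apply/andP; split;
  rewrite ?ler_pdivrMr ?ler_pdivlMr ?ltr_pdivrMr ?ltr_pdivlMr // in h1 h2 *; lra.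
Qed.

Lemma lebesgue_measure_reflect_scale (Y : set R) : measurable Y ->
  lebesgue_measure (reflect_scale @^-1` Y) = (b^-1%:E * lebesgue_measure Y)%E.
Proof.
move=> mY; have b_ge0 : 0 <= b by rewrite ltW.
have := @lebesgue_measure_unique R (mscale (NngNum b_ge0)
  (pushforward lebesgue_measure (reflect_scale : _ -> measurableTypeR R))).
move=> /(_ measurable_reflect_scale) unique; rewrite [in RHS]unique //=.
- by rewrite /mscale /pushforward /= muleA -EFinM mulVf ?mul1e ?lt0r_neq0.
- move=> _ /ocitvP[->|[[l u] /= lu ->]]; first by rewrite !measure0.
  rewrite /mscale /=; rewrite /pushforward reflect_scale_preimage_itv.
  rewrite !lebesgue_measure_itv /= !lte_fin lu ifT; last first.
    by rewrite ltr_pM2r ?invr_gt0 //; lra.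
  by rewrite -!EFinB -EFinM; congr (_%:E); field; exact: lt0r_neq0.
Qed.

End reflect_scale.

Section gap_sets.
Context {R : realType} (i0 : nat).
Hypothesis i0_gt0 : (0 < i0)%N.
Implicit Types q : nat -> nat.

Definition gap k a q := (q k - (if k is k'.+1 then q k' else a))%N.

Lemma gapS k a q : gap k.+1 a q = gap k (q 0) (tailq q).
Proof. by case: k. Qed.

Fixpoint gap_set k a : set R :=
  if k is k'.+1 then
    \bigcup_n (reflect_scale (a + n).+1%:R @^-1` gap_set k' (a + n).+1)
  else `](((a + i0)%:R + 1)^-1), ((a + i0)%:R^-1)[%classic.

Lemma measurable_gap_set k a : measurable (gap_set k a).
Proof.
elim: k a => [|k IH] a /=; first exact: measurable_itv.
apply: bigcupT_measurable => n; rewrite -[X in measurable X]setTI.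
exact: measurable_reflect_scale.
Qed.

Lemma reflect_scale_inv_bound (b : nat) (x : R) : (0 < b)%N ->
  0 < reflect_scale b%:R x < (b%:R + 1)^-1 -> (b%:R + 1)^-1 < x < b%:R^-1.
Proof.
rewrite /reflect_scale => b_gt0 /andP[h1 h2].
have hb : 1 <= b%:R :> R by rewrite ler1n.
set y := b%:R in hb h1 h2 *.
have e1 : (y + 1)^-1 * (y + 1) = 1 by rewrite mulVf //; lra.
have e2 : y^-1 * y = 1 by rewrite mulVf //; lra.
by apply/andP; split; rewrite -(ltr_pM2l (_ : 0 < y)); nra.
Qed.

Lemma gap_set_bound k a x : gap_set k a x -> 0 < x < (a%:R + 1)^-1.
Proof.
have inv_le a' m : (a' < m)%N -> m%:R^-1 <= (a'%:R + 1)^-1 :> R.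
  by move=> am; rewrite natr1 lef_pV2 ?posrE ?ltr0n ?ler_nat // (leq_ltn_trans _ am).
elim: k a x => [|k IH] a x /=.
  rewrite in_itv /= => /andP[lb ub].
  have pos : 0 < ((a + i0)%:R + 1)^-1 :> R by rewrite natr1 invr_gt0 ltr0n.
  apply/andP; split; first exact: lt_trans pos lb.
  by apply: lt_le_trans ub _; apply: inv_le; rewrite -[X in (X < _)%N]addn0 ltn_add2l.
move=> [n _ /IH bnd].
have /andP[lb ub] := reflect_scale_inv_bound (ltn0Sn _) bnd.
have pos : 0 < ((a + n).+1%:R + 1)^-1 :> R by rewrite natr1 invr_gt0 ltr0n.
apply/andP; split; first exact: lt_trans pos lb.
by apply: lt_le_trans ub _; apply: inv_le; rewrite ltnS leq_addr.
Qed.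

Lemma reflect_scale_ostro q : increasing_pos q ->
  reflect_scale (q 0)%:R (ostro q) = ostro (tailq q) :> R.
Proof.
move=> iq; rewrite /reflect_scale ostroS // mulrA mulfV ?mul1r; first lra.
by rewrite pnatr_eq0 -lt0n iq.1.
Qed.

Lemma ostro_gap_setE k a q : increasing_pos q -> (a < q 0)%N ->
  gap_set k a (ostro q : R) <-> gap k a q = i0.
Proof.
elim: k a q => [|k IH] a q iq aq.
  rewrite /= in_itv /= /gap; split=> [bounds|<-].
    by rewrite (ostro_head iq _ bounds) ?addKn // addn_gt0 i0_gt0 orbT.
  rewrite subnKC; last exact: ltnW.
  by rewrite (inv_head_succ_lt_ostro iq) (ostro_lt_inv_head iq).
have q0S : (q 0 < tailq q 0)%N by case: iq.
rewrite gapS -(IH (q 0) (tailq q) (increasing_pos_tail iq) q0S) /=.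
split=> [[n _]|].
  move=> /[dup] /gap_set_bound /(reflect_scale_inv_bound (ltn0Sn _)) bounds.
  by rewrite -(ostro_head iq _ bounds) //= reflect_scale_ostro.
move=> h; exists (q 0 - a.+1)%N => //=.
by rewrite -addSn subnKC // reflect_scale_ostro.
Qed.

(* The factor 1/((a+1)(a+2)) survives the sum over the next partial sum b > a:
   sum_(b > a) 1/(b(b+1)(b+2)) = 1/(2(a+1)(a+2)). *)
Lemma lebesgue_gap_set_le k a :
  (lebesgue_measure (gap_set k a) <= ((2^-1) ^+ k / ((a%:R + 1) * (a%:R + 2)))%:E)%E.
Proof.
elim: k a => [|k IH] a.
  have a_ge0 := ler0n R a.
  have le_c : a%:R + 1 <= (a + i0)%:R :> R.
    by rewrite natr1 ler_nat -addn1 leq_add2l.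
  set c := (a + i0)%:R in le_c *.
  rewrite /= lebesgue_measure_itv /= lte_fin ifT; last by rewrite ltf_pV2 ?posrE; lra.
  rewrite -EFinB lee_fin expr0 mul1r.
  have -> : c^-1 - (c + 1)^-1 = (c * (c + 1))^-1 by field; rewrite ?lt0r_neq0 //; lra.
  by rewrite lef_pV2 ?posrE; nra.
pose F n := reflect_scale (a + n).+1%:R @^-1` gap_set k (a + n).+1.
have mF n : measurable (F n).
  rewrite -[X in measurable X]setTI.
  exact: measurable_reflect_scale measurableT _ (measurable_gap_set _ _).
have cover : gap_set k.+1 a `<=` \bigcup_n F n by [].
apply: le_trans (measure_sigma_subadditive lebesgue_measure mF (measurable_gap_set _ _) cover) _.
apply: nneseries_le_ub => [n|N]; first exact: measure_ge0.
apply: (@le_trans _ _ (\sum_(0 <= n < N) ((2^-1) ^+ k *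
    (((a + n)%:R + 1) * ((a + n)%:R + 2) * ((a + n)%:R + 3))^-1)%:E)%E).
  apply: lee_sum => n _.
  rewrite [leLHS](_ : _ = ((a + n).+1%:R^-1%:E * lebesgue_measure (gap_set k (a + n).+1))%E).
    2: exact (lebesgue_measure_reflect_scale (ltr0Sn R (a + n)) (measurable_gap_set _ _)).
  apply: le_trans (lee_wpmul2l _ (IH _)) _; first by rewrite lee_fin invr_ge0.
  rewrite -EFinM lee_fin -natr1; have := ler0n R (a + n); set x := (a + n)%:R => x_ge0.
  by rewrite le_eqVlt; apply/orP; left; apply/eqP; field; rewrite ?lt0r_neq0 //; lra.
rewrite sumEFin lee_fin -mulr_sumr big_mkord telescope_inv3 exprS.
have p_ge0 : 0 <= 2^-1 ^+ k :> R by rewrite exprn_ge0 ?invr_ge0.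
set p := 2^-1 ^+ k; set u := (_ * _)^-1; set v := (_ * _)^-1.
have v_ge0 : 0 <= v by rewrite invr_ge0 mulr_ge0 // addr_ge0.
have : 0 <= p * v * 2^-1 by rewrite !mulr_ge0 ?invr_ge0.
nra.
Qed.

Lemma lebesgue_lim_sup_gap_set : lebesgue_measure (lim_sup_set (gap_set ^~ 0%N)) = 0%E.
Proof.
apply: lim_sup_set_cvg0 => [k|]; first exact: measurable_gap_set.
apply: le_lt_trans (ltry 1); apply: nneseries_le_ub => [k|N]; first exact: measure_ge0.
apply: (@le_trans _ _ (\sum_(0 <= k < N) (2^-1 ^+ k.+1)%:E)%E).
  apply: lee_sum => k _; apply: le_trans (lebesgue_gap_set_le k 0) _.
  by rewrite lee_fin exprS le_eqVlt; apply/orP; left; apply/eqP; field.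
by rewrite sumEFin lee_fin sum_half_powS_le1.
Qed.
End gap_sets.

Definition psums (e : nat -> nat) j := (\sum_(l < j.+1) e l)%N.

Lemma psums0 e : psums e 0 = e 0.
Proof. by rewrite /psums big_ord1. Qed.

Lemma psumsS e j : psums e j.+1 = (psums e j + e j.+1)%N.
Proof. by rewrite /psums big_ord_recr. Qed.

Lemma increasing_pos_psums e : (forall k, 0 < e k)%N -> increasing_pos (psums e).
Proof. by move=> e_gt0; split=> [|j]; rewrite ?psums0 // psumsS -addn1 leq_add2l. Qed.

Lemma gap_psums k e : gap k 0 (psums e) = e k.
Proof. by case: k => [|k]; rewrite /gap ?psums0 ?subn0 // psumsS addKn. Qed.

Lemma psums_inj e e' : psums e =1 psums e' -> e =1 e'.
Proof.
move=> ee' [|k]; first by have := ee' 0%N; rewrite !psums0.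
by have := ee' k.+1; rewrite !psumsS ee' => /addnI.
Qed.

Section random_ostrogradsky_series.
Context d (T : measurableType d) (R : realType) (P : probability T R).
Variable eta : nat -> T -> nat.
Hypothesis eta_gt0 : forall k w, (0 < eta k w)%N.
Hypothesis eta_meas : forall k i, measurable [set w | eta k w = i].
Local Notation X := (@eta_sum _ T R eta).

Lemma eta_sumE w : X w = ostro (psums (eta^~ w)).
Proof. by []. Qed.

Lemma eta_sum_eq w w' : X w = X w' <-> forall k, eta k w = eta k w'.
Proof.
rewrite !eta_sumE; split=> [e|e].
  by apply/psums_inj/(ostro_inj _ _ e); exact: increasing_pos_psums.
by congr ostro; apply/funext => j; apply: eq_bigr => l _; rewrite e.
Qed.

Lemma eta_sum_preimage1 w0 :
  X @^-1` [set X w0] = \bigcap_k [set w | eta k w = eta k w0].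
Proof.
apply/seteqP; split=> w /=; first by move=> /eta_sum_eq e k _; exact: e.
by move=> e; apply/eta_sum_eq => k; exact: e.
Qed.

Lemma measurable_eta_sum_preimage1 x : measurable (X @^-1` [set x]).
Proof.
have [[w0 <-]|none] := pselect (exists w0, X w0 = x).
  by rewrite eta_sum_preimage1; apply: bigcapT_measurable => k; exact: eta_meas.
rewrite [A in measurable A](_ : _ = set0) //.
by apply/seteqP; split=> w // xw; apply: none; exists w.
Qed.

Local Open Scope ereal_scope.

Lemma pik_fineK i k : pik P eta i k = (fine (pik P eta i k))%:E.
Proof. by rewrite fineK // fin_num_measure. Qed.

Lemma pik_le_pmax i k : pik P eta i k <= pmax P eta k.
Proof. by apply: ereal_sup_ubound; exists i. Qed.

Lemma pmax_ge0 k : 0 <= pmax P eta k.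
Proof. exact: le_trans (measure_ge0 _ _) (pik_le_pmax 0 k). Qed.

Lemma pmax_le1 k : pmax P eta k <= 1.
Proof. by apply: ge_ereal_sup => _ [i _ <-]; exact: probability_le1. Qed.

Lemma pmax_fineK k : pmax P eta k = (fine (pmax P eta k))%:E.
Proof. by rewrite fineK // ge0_fin_numE ?pmax_ge0 // (le_lt_trans (pmax_le1 k)) ?ltry. Qed.

Lemma prod_pmaxE :
  prod_pmax P eta = ereal_inf (range (fun n => \prod_(k < n) pmax P eta k)).
Proof.
apply/cvg_lim/ereal_nonincreasing_cvgn/nonincreasing_seqP => // n.
rewrite big_ord_recr /= -[leRHS]mule1 lee_pmul ?pmax_ge0 ?pmax_le1 //.
by apply: prode_ge0 => k _; exact: pmax_ge0.
Qed.

Lemma prod_pmax_le n : prod_pmax P eta <= \prod_(k < n) pmax P eta k.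
Proof. by rewrite prod_pmaxE; apply: ereal_inf_lbound; exists n. Qed.

Hypothesis eta_indep : mutually_independent P eta.

Lemma eta_sum_atom_le x n : P (X @^-1` [set x]) <= \prod_(k < n) pmax P eta k.
Proof.
have [[w0 <-]|none] := pselect (exists w0, X w0 = x); last first.
  rewrite [A in P A](_ : _ = set0) ?measure0; last first.
    by apply/seteqP; split=> w // xw; apply: none; exists w.
  by apply: prode_ge0 => k _; exact: pmax_ge0.
rewrite eta_sum_preimage1 -(big_mkord xpredT).
have indep := eta_indep (fun k => [set eta k w0]) (iota_uniq 0 (n - 0)).
apply: le_trans (_ : _ <= P [set w | forall k, k \in index_iota 0 n -> [set eta k w0] (eta k w)]) _.
  apply: le_measure; rewrite ?inE; last by move=> w ew k _; exact: ew.
    by apply: bigcapT_measurable => k; exact: eta_meas.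
  by apply: measurable_forall_in => k; exact: eta_meas.
rewrite indep; apply: lee_prod_nneg => k; [exact: measure_ge0|exact: pik_le_pmax].
Qed.

Lemma eta_sum_atom0 : ~ 0 < prod_pmax P eta -> forall x, P (X @^-1` [set x]) = 0.
Proof.
move=> prod_le0 x; apply/eqP; rewrite eq_le measure_ge0 andbT.
apply: le_trans (_ : _ <= prod_pmax P eta) _; last by rewrite leNgt; exact/negP.
by rewrite prod_pmaxE; apply/ereal_infP => _ [n _ <-]; exact: eta_sum_atom_le.
Qed.

Lemma pik_fine01 i k : (0 <= fine (pik P eta i k) <= 1)%R.
Proof. by rewrite fine_ge0 ?measure_ge0 //= -lee_fin -pik_fineK probability_le1. Qed.

Lemma pmax_fine01 k : (0 <= fine (pmax P eta k) <= 1)%R.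
Proof. by rewrite fine_ge0 ?pmax_ge0 //= -lee_fin -pmax_fineK pmax_le1. Qed.

Variable i0 : nat.
Hypothesis pik_i0_div : \sum_(0 <= k <oo) pik P eta i0 k = +oo.

Lemma i0_gt0 : (0 < i0)%N.
Proof.
rewrite lt0n; apply/negP => /eqP i0_eq0; move: pik_i0_div; rewrite eseries0 // => k _ _.
rewrite /pik i0_eq0 [A in P A](_ : _ = set0) ?measure0 //.
by apply/seteqP; split=> w //= eta0; have := eta_gt0 k w; rewrite eta0.
Qed.

Lemma pik_i0_tail_unbounded n (M : R) :
  exists N, M%:E < \sum_(n <= k < N) pik P eta i0 k.
Proof.
apply: contrapT => none.
have tail_le : \sum_(n <= k <oo) pik P eta i0 k <= M%:E.
  apply: lime_le; first by apply: is_cvg_nneseries => k _ _; exact: measure_ge0.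
  by apply: nearW => N; rewrite leNgt; apply/negP => lt; apply: none; exists N.
move: pik_i0_div; rewrite (nneseries_split 0 n) ?add0n => [head_tail|k _]; last first.
  exact: measure_ge0.
suff : (+oo : \bar R) \is a fin_num by [].
rewrite -head_tail fin_numD; apply/andP; split.
  by apply/sum_fin_numP => k _ _; exact: fin_num_measure.
rewrite ge0_fin_numE ?(le_lt_trans tail_le) ?ltry //.
by apply: nneseries_ge0 => k _ _; exact: measure_ge0.
Qed.

Lemma eta_never_i0_from_null n :
  P (\bigcap_(k in [set k | (n <= k)%N]) [set w | eta k w <> i0]) = 0.
Proof.
set D := \bigcap_(k in _) _.
have mD : measurable D.
  by apply: bigcap_measurable => [|k _]; [exists n => /=|exact/measurableC/eta_meas].
have PD_le N : P D <= \prod_(n <= k < N) (1 - pik P eta i0 k).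
  have indep := eta_indep (fun=> ~` [set i0]) (iota_uniq n (N - n)).
  apply: le_trans (_ : _ <= P [set w | forall k, k \in index_iota n N ->
      (~` [set i0]) (eta k w)]) _.
    apply: le_measure; rewrite ?inE //.
      by apply: measurable_forall_in => k; exact/measurableC/eta_meas.
    by move=> w Dw k; rewrite mem_index_iota => /andP[nk _]; exact: Dw.
  rewrite indep le_eqVlt; apply/orP; left; apply/eqP; apply: eq_bigr => k _.
  by rewrite -probability_setC.
apply/eqP; rewrite eq_le measure_ge0 andbT leNgt; apply/negP => PD_gt0.
have PD_fineK : P D = (fine (P D))%:E by rewrite fineK // fin_num_measure.
have c_gt0 : (0 < fine (P D))%R by rewrite -lte_fin -PD_fineK.
have [N lt_sum] := pik_i0_tail_unbounded n (fine (P D))^-1.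
have prod_ge : (fine (P D) <= \prod_(k <- index_iota n N) (1 - fine (pik P eta i0 k)))%R.
  rewrite -lee_fin -PD_fineK -prodEFin; under eq_bigr do rewrite EFinB -pik_fineK.
  exact: PD_le.
have := sum_le_inv_prod_compl (f := fun k => fine (pik P eta i0 k)) (pik_fine01 i0) c_gt0 prod_ge.
rewrite -lee_fin -sumEFin; under eq_bigr do rewrite -pik_fineK.
by rewrite leNgt lt_sum.
Qed.

Lemma eta_eq_i0_infinitely_often : P (lim_sup_set (fun k => [set w | eta k w = i0])) = 1.
Proof.
set L := lim_sup_set _.
have complL : ~` L = \bigcup_n \bigcap_(k in [set k | (n <= k)%N]) [set w | eta k w <> i0].
  by rewrite /L /lim_sup_set setC_bigcap; apply: eq_bigcupr => n _; rewrite setC_bigcup.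
have mD n : measurable (\bigcap_(k in [set k | (n <= k)%N]) [set w | eta k w <> i0]).
  by apply: bigcap_measurable => [|k _]; [exists n => /=|exact/measurableC/eta_meas].
rewrite -[L]setCK probability_setC ?complL ?measure_bigcup0 ?sube0 //.
- exact: eta_never_i0_from_null.
- exact: bigcupT_measurable.
Qed.

Lemma eta_sum_preimage_gap_set k : X @^-1` gap_set i0 k 0 = [set w | eta k w = i0].
Proof.
have gapE w : gap_set i0 k 0 (X w) <-> eta k w = i0.
  have iq := increasing_pos_psums (eta_gt0^~ w).
  by rewrite -(gap_psums k (eta^~ w)); exact: ostro_gap_setE i0_gt0 _ _ _ iq iq.1.
by apply/seteqP; split=> w /gapE.
Qed.

Lemma eta_sum_singular : ~ 0 < prod_pmax P eta -> singular_continuous_distr P X.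
Proof.
move=> prod_le0; split; first exact: eta_sum_atom0.
exists (lim_sup_set (gap_set i0 ^~ 0%N)); split.
  by apply: measurable_lim_sup_set => k; exact: measurable_gap_set.
split; first exact: lebesgue_lim_sup_gap_set i0_gt0.
rewrite -eta_eq_i0_infinitely_often /lim_sup_set preimage_bigcap.
congr (P _); apply: eq_bigcapr => n _; rewrite preimage_bigcup.
by apply: eq_bigcupr => k _; exact: eta_sum_preimage_gap_set.
Qed.

Lemma sum_compl_pmax_le : 0 < prod_pmax P eta -> forall N,
  (\sum_(0 <= k < N) (1 - fine (pmax P eta k)) <= (fine (prod_pmax P eta))^-1)%R.
Proof.
move=> prod_gt0 N.
have prod_fineK : prod_pmax P eta = (fine (prod_pmax P eta))%:E.
  rewrite fineK // ge0_fin_numE ?(ltW prod_gt0) //.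
  by rewrite (le_lt_trans (prod_pmax_le 0)) // big_ord0 ltry.
apply: sum_le_inv_prod_compl => [k||].
- by have /andP[] := pmax_fine01 k; lra.
- by rewrite -lte_fin -prod_fineK.
- rewrite -lee_fin -prod_fineK -prodEFin big_mkord.
  under eq_bigr do rewrite subKr -pmax_fineK.
  exact: prod_pmax_le.
Qed.

Lemma summable_pmax_misses : 0 < prod_pmax P eta ->
  exists m : nat -> nat, \sum_(0 <= k <oo) P [set w | eta k w <> m k] < +oo.
Proof.
move=> prod_gt0; pose y k := fine (pmax P eta k).
have near_max k : exists i, (y k - 2^-1 ^+ k.+1 < fine (pik P eta i k))%R.
  have : (y k - 2^-1 ^+ k.+1)%:E < pmax P eta k.
    by rewrite pmax_fineK lte_fin ltrBlDr ltrDl exprn_gt0 // invr_gt0.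
  by move=> /ereal_sup_gt[_ [i _ <-]]; rewrite pik_fineK lte_fin; exists i.
have [m m_near] := choice near_max.
exists m; apply: le_lt_trans (ltry ((fine (prod_pmax P eta))^-1 + 1)%R).
apply: nneseries_le_ub => [k|N]; first exact: measure_ge0.
apply: (@le_trans _ _ (\sum_(0 <= k < N) ((1 - y k) + 2^-1 ^+ k.+1)%:E)).
  apply: lee_sum => k _; rewrite [A in P A](_ : _ = ~` [set w | eta k w = m k]) //.
  rewrite probability_setC // -/(pik P eta (m k) k) pik_fineK -EFinB lee_fin.
  by have := m_near k; lra.
by rewrite sumEFin lee_fin big_split /= lerD ?sum_compl_pmax_le ?sum_half_powS_le1.
Qed.

(* [nth (m k) l k] patches the finite sequence [l] onto [m]. *)
Lemma eta_sum_eventually_patch (m : nat -> nat) w :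
  ~ lim_sup_set (fun k => [set w | eta k w <> m k]) w ->
  exists l : seq nat, X w = ostro (psums (fun k => nth (m k) l k)).
Proof.
move=> not_io.
have [n eq_m] : exists n, forall j, (n <= j)%N -> eta j w = m j.
  apply: contrapT => none; apply: not_io => n _.
  apply: contrapT => all_eq; apply: none; exists n => j nj.
  by apply: contrapT => neq; apply: all_eq; exists j.
exists [seq eta k w | k <- iota 0 n]; rewrite eta_sumE; congr ostro.
apply/funext => j; apply: eq_bigr => k _.
have [kn|nk] := ltnP k n; first by rewrite (nth_map 0%N) ?size_iota // nth_iota.
by rewrite nth_default ?size_map ?size_iota // eq_m.
Qed.

Lemma eta_sum_discrete : 0 < prod_pmax P eta -> purely_discrete_distr P X.
Proof.
move=> prod_gt0; have [m misses_fin] := summable_pmax_misses prod_gt0.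
pose F k := [set w | eta k w <> m k].
have mF k : measurable (F k) by exact/measurableC/eta_meas.
pose h (l : seq nat) : R := ostro (psums (fun k => nth (m k) l k)).
exists (range h); split; first exact: sub_countable (card_image_le _ _) (countableP _).
have m_range : measurable (X @^-1` range h).
  rewrite [A in measurable A](_ : _ = \bigcup_l X @^-1` [set h l]).
    apply: countable_bigcupT_measurable => [|l]; first exact: countableP.
    exact: measurable_eta_sum_preimage1.
  by apply/seteqP; split=> w [l _ e]; exists l.
have F_null : P (lim_sup_set F) = 0 := lim_sup_set_cvg0 mF misses_fin.
have compl1 : P (~` lim_sup_set F) = 1.
  by rewrite probability_setC ?F_null ?sube0 //; exact: measurable_lim_sup_set mF.
apply/eqP; rewrite eq_le probability_le1 //= -[A in A <= _]compl1.
apply: le_measure; rewrite ?inE //; first exact/measurableC/measurable_lim_sup_set/mF.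
by move=> w /eta_sum_eventually_patch[l e]; exists l => //; exact/esym.
Qed.

End random_ostrogradsky_series.

Theorem mainTheorem11 (d : measure_display) (T : measurableType d)
  (R : realType) (P : probability T R) (eta : nat -> T -> nat)
  (eta_pos : forall k w, (0 < eta k w)%N)
  (eta_meas : forall k i, measurable [set w | eta k w = i])
  (eta_indep : mutually_independent P eta)
  (i0 : nat)
  (hdiv : (\sum_(0 <= k <oo) pik P eta i0 k)%E = +oo%E) :
  (purely_discrete_distr P (eta_sum eta) <-> (0 < prod_pmax P eta)%E) /\
  (~ (0 < prod_pmax P eta)%E ->
     singular_continuous_distr P (eta_sum eta)).
Proof.
split; first split.
- move=> discrete; apply: contrapT => prod_le0.
  apply: atomless_not_purely_discrete discrete.
    exact: measurable_eta_sum_preimage1.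
  exact: eta_sum_atom0.
- exact: eta_sum_discrete.
- exact: eta_sum_singular hdiv.
Qed.
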